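(* Let $H\in M_N(\mathbb C)$ be a complex Hadamard matrix with rows $H_1,\dots,H_N\in\mathbb T^N$. Define $U_{ij}\in M_N(\mathbb C)$ as the orthogonal projection onto $\mathbb C\cdot(H_i/H_j)$ (coordinatewise quotient). Then $$U_{ij}=\frac{1}{N}\left(\frac{H_{ik}H_{jl}}{H_{il}H_{jk}}\right)_{kl},$$ the matrix $U=(U_{ij})$ is magic, the matrix $U'$ defined by $(U'_{ij})_{kl}=(U_{kl})_{ij}$ is magic as well (so $U$ is a projective model), and $U'(H)=U(H^t)$.
   Context: A complex Hadamard matrix is an $N\times N$ matrix with all entries of modulus $1$ and pairwise orthogonal rows. A square matrix of operators is magic if its entries are orthogonal projections and each row and column sums to $1$. $U(H)$ denotes the matrix $(U_{ij})$ constructed from $H$ as in the statement. *)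

From HB Require Import structures.
From mathcomp Require Import all_boot all_order all_algebra.
Set Implicit Arguments. Unset Strict Implicit. Unset Printing Implicit Defensive.
Import Order.TTheory GRing.Theory Num.Theory.
Local Open Scope ring_scope.

Definition adjmx (C : numClosedFieldType) (m n : nat) (A : 'M[C]_(m, n)) : 'M[C]_(n, m) :=
  (map_mx Num.conj A)^T.

Definition complex_hadamard (C : numClosedFieldType) (N : nat) (H : 'M[C]_N) : Prop :=
  (forall i j, `|H i j| = 1) /\
  (forall i j : 'I_N, i != j -> \sum_(k < N) H i k * (H j k)^* = 0).

Definition is_orth_proj (C : numClosedFieldType) (N : nat) (P : 'M[C]_N) : Prop :=
  P *m P = P /\ adjmx P = P.

(* P is the orthogonal projection onto the line C.v : an orthogonal projection
   whose range (column space, i.e. row space of P^T) equals span v. *)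
Definition is_orth_proj_onto (C : numClosedFieldType) (N : nat)
    (P : 'M[C]_N) (v : 'rV[C]_N) : Prop :=
  is_orth_proj P /\ (P^T == v)%MS.

Definition row_quot (C : numClosedFieldType) (N : nat) (H : 'M[C]_N) (i j : 'I_N)
  : 'rV[C]_N := \row_k (H i k / H j k).

Definition is_U_of (C : numClosedFieldType) (N : nat) (H : 'M[C]_N)
    (U : 'I_N -> 'I_N -> 'M[C]_N) : Prop :=
  forall i j, is_orth_proj_onto (U i j) (row_quot H i j).

Definition magic (C : numClosedFieldType) (N : nat) (U : 'I_N -> 'I_N -> 'M[C]_N) : Prop :=
  (forall i j, is_orth_proj (U i j)) /\
  (forall i, \sum_(j < N) U i j = 1%:M) /\
  (forall j, \sum_(i < N) U i j = 1%:M).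

Definition Uprime (C : numClosedFieldType) (N : nat) (U : 'I_N -> 'I_N -> 'M[C]_N)
  : 'I_N -> 'I_N -> 'M[C]_N := fun i j => \matrix_(k, l) U k l i j.

From HB Require Import structures.
From mathcomp Require Import all_boot all_order all_algebra.
From mathcomp Require Import ring.
From Stdlib Require Import FunctionalExtensionality.

(* The projection onto a line C v has entries v_k v_l^* / |v|^2.  For v = H_i/H_j all
   entries are unimodular, so |v|^2 = N and conjugation is inversion, giving the
   formula.  Row sums of U reduce to H^* H = N (a consequence of H H^* = N), column
   sums to row sums since (U_ij)_kl = (U_ji)_lk, and the formula is visibly
   invariant under (i,j,k,l,H) -> (k,l,i,j,H^T), whence U' = U(H^T). *)

Set Implicit Arguments. Unset Strict Implicit. Unset Printing Implicit Defensive.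
Import Order.TTheory GRing.Theory Num.Theory.
Local Open Scope ring_scope.

Lemma orth_proj_onto_lineE (C : numClosedFieldType) (N : nat) (P : 'M[C]_N) (v : 'rV[C]_N) :
  v != 0 -> is_orth_proj_onto P v ->
  forall k l, P k l = v 0 k * (v 0 l)^* / \sum_m `|v 0 m| ^+ 2.
Proof.
(* The range condition gives P = v^T c^T; self-adjointness forces s c = v^*,
   and P v^T = v^T normalises c v^T = 1. *)
move=> /matrix0Pn[i0 [k0 vk0]] [[PP adjP] /andP[Pv vP]].
rewrite (ord1 i0) in vk0.
have [c Pc] := submxP Pv; have [d vd] := submxP vP.
have PE k l : P k l = v 0 k * c l 0.
  by have := congr1 (fun M : 'M_N => M l k) Pc; rewrite !mxE big_ord1 mulrC.
have P_adj k l : P k l = (P l k)^*.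
  by have := congr1 (fun M : 'M_N => M k l) adjP; rewrite !mxE.
have cv1 : \sum_l c l 0 * v 0 l = 1.
  have Pv_fix : P *m v^T = v^T by rewrite vd trmx_mul trmxK mulmxA PP.
  have := congr1 (fun M : 'cV_N => M k0 0) Pv_fix; rewrite !mxE.
  under eq_bigr => l _ do rewrite PE mxE -mulrA.
  by rewrite -mulr_sumr -[RHS]mulr1 => /(mulfI vk0).
set s := \sum_m _.
have sc l : s * c l 0 = (v 0 l)^*.
  transitivity ((v 0 l)^* * (\sum_k c k 0 * v 0 k)^*); last by rewrite cv1 rmorph1 mulr1.
  rewrite mulr_suml rmorph_sum mulr_sumr; apply: eq_bigr => k _.
  by rewrite normCK mulrAC -PE P_adj PE !rmorphM mulrA.
have s_neq0 : s != 0.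
  by apply: contra_neq vk0 => s0; rewrite -[v 0 k0]conjCK -sc s0 mul0r conjC0.
by move=> k l; rewrite PE -(sc l) [s * _]mulrC mulrA mulfK.
Qed.

Lemma conjC_unit (C : numClosedFieldType) (x : C) : `|x| = 1 -> x^* = x^-1.
Proof. by move=> x1; rewrite invC_norm x1 expr1n invr1 mul1r. Qed.

Lemma pnatr_ord_neq0 (C : numClosedFieldType) (N : nat) (k : 'I_N) : N%:R != 0 :> C.
Proof. by rewrite pnatr_eq0 -lt0n (leq_ltn_trans _ (ltn_ord k)). Qed.

Definition hadamard_model (C : numClosedFieldType) (N : nat) (H : 'M[C]_N)
    (i j : 'I_N) : 'M[C]_N :=
  \matrix_(k, l) (N%:R^-1 * ((H i k * H j l) / (H i l * H j k))).

Lemma hadamard_model_trmx (C : numClosedFieldType) (N : nat) (H : 'M[C]_N) i j :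
  hadamard_model H i j = (hadamard_model H j i)^T.
Proof.
by apply/matrixP => k l; rewrite !mxE [H i k * _]mulrC [H i l * _]mulrC.
Qed.

Lemma Uprime_hadamard_model (C : numClosedFieldType) (N : nat) (H : 'M[C]_N) :
  Uprime (hadamard_model H) = hadamard_model H^T.
Proof.
apply: functional_extensionality_dep => i; apply: functional_extensionality_dep => j.
by apply/matrixP => k l; rewrite !mxE [H l i * _]mulrC.
Qed.

Section Hadamard.
Variables (C : numClosedFieldType) (N : nat) (H : 'M[C]_N).
Hypothesis hH : complex_hadamard H.

Lemma hadamard_neq0 i k : H i k != 0.
Proof. by rewrite -normr_eq0 hH.1 oner_eq0. Qed.

Lemma hadamard_mul_adj : H *m adjmx H = N%:R%:M.
Proof.
apply/matrixP => i j; rewrite !mxE.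
under eq_bigr => k _ do rewrite !mxE.
have [<-|ij] := eqVneq i j; last by rewrite hH.2 // mulr0n.
under eq_bigr => k _ do rewrite -normCK hH.1 expr1n.
by rewrite sumr_const card_ord mulr1n.
Qed.

Lemma hadamard_adj_mul : adjmx H *m H = N%:R%:M.
Proof.
apply/matrixP => k l; have N_neq0 := pnatr_ord_neq0 C k.
have /mulmx1C : (N%:R^-1 *: H) *m adjmx H = 1%:M.
  by rewrite -scalemxAl hadamard_mul_adj -scalemx1 scalerA mulVf // scale1r.
move=> /(congr1 ( *:%R N%:R)); rewrite -scalemxAr scalerA mulfV // scale1r.
by rewrite scalemx1 => ->.
Qed.

Lemma hadamard_sum_col_quot k l :
  \sum_j H j l / H j k = N%:R *+ (k == l).
Proof.
have := congr1 (fun M : 'M_N => M k l) hadamard_adj_mul; rewrite !mxE => <-.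
apply: eq_bigr => j _; rewrite !mxE conjC_unit ?hH.1 //; exact: mulrC.
Qed.

Lemma hadamard_trmx : complex_hadamard H^T.
Proof.
split=> [i j|k l kl]; first by rewrite mxE hH.1.
under eq_bigr => j _ do rewrite !mxE conjC_unit ?hH.1 //.
by rewrite hadamard_sum_col_quot eq_sym (negbTE kl).
Qed.

Lemma hadamard_model_sum_row i : \sum_j hadamard_model H i j = 1%:M.
Proof.
apply/matrixP => k l; rewrite summxE.
rewrite (eq_bigr (fun j => N%:R^-1 * (H i k / H i l) * (H j l / H j k))) => [|j _].
  rewrite -mulr_sumr hadamard_sum_col_quot mxE.
  have [<-|kl] := eqVneq k l; last by rewrite !mulr0n mulr0.
  by rewrite mulfV ?hadamard_neq0 // mulr1 !mulr1n mulVf // (pnatr_ord_neq0 C k).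
by rewrite mxE invfM; ring.
Qed.

Lemma hadamard_model_sum_col j : \sum_i hadamard_model H i j = 1%:M.
Proof.
under eq_bigr => i _ do rewrite hadamard_model_trmx.
by rewrite -raddf_sum /= hadamard_model_sum_row trmx1.
Qed.

Lemma is_U_of_hadamardE U : is_U_of H U -> U = hadamard_model H.
Proof.
move=> hU; apply: functional_extensionality_dep => i.
apply: functional_extensionality_dep => j; apply/matrixP => k l.
have quot_unit m : `|row_quot H i j 0 m| = 1 by rewrite mxE normf_div !hH.1 divr1.
have quot_neq0 : row_quot H i j != 0.
  by apply/matrix0Pn; exists 0, k; rewrite -normr_eq0 quot_unit oner_eq0.
rewrite (orth_proj_onto_lineE quot_neq0 (hU i j)).
under eq_bigr => m _ do rewrite quot_unit expr1n.
rewrite sumr_const card_ord conjC_unit // !mxE invf_div invfM.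
by rewrite mulrC; congr (_ * _); field; rewrite ?hadamard_neq0.
Qed.

Lemma magic_of_U U : is_U_of H U -> magic U.
Proof.
move=> hU; have UE := is_U_of_hadamardE hU.
split; first by move=> i j; case: (hU i j).
rewrite UE; split; [exact: hadamard_model_sum_row | exact: hadamard_model_sum_col].
Qed.

End Hadamard.

Theorem proposition2p3 (C : numClosedFieldType) (N : nat) (H : 'M[C]_N)
    (U V : 'I_N -> 'I_N -> 'M[C]_N) :
  complex_hadamard H ->
  is_U_of H U ->
  is_U_of H^T V ->
  (forall i j k l, U i j k l = N%:R^-1 * ((H i k * H j l) / (H i l * H j k))) /\
  magic U /\
  magic (Uprime U) /\
  Uprime U = V.
Proof.
move=> hH hU hV; have hHT := hadamard_trmx hH.
have UE := is_U_of_hadamardE hH hU.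
have U'V : Uprime U = V.
  by rewrite UE Uprime_hadamard_model (is_U_of_hadamardE hHT hV).
split; first by move=> i j k l; rewrite UE mxE.
by rewrite U'V; split; [exact: magic_of_U hU | split; [exact: magic_of_U hV |]].
Qed.
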